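(* Let $P,Q$ be mutually absolutely continuous probability measures, let $E$ be measurable, $q:=Q(E)$, and $r:=\chi^2(Q\Vert P)$. Then $$P(E)\le\frac{r+2q+\sqrt{r^2+4r\,q(1-q)}}{2(1+r)}.$$
   Context: $\chi^2(Q\Vert P):=\int\big(\tfrac{\mathrm dQ}{\mathrm dP}\big)^2\mathrm dP-1$; equivalently it is the $f$-divergence $D_f(P\Vert Q)=\int f(\mathrm dP/\mathrm dQ)\,\mathrm dQ$ with $f(t)=1/t-1$. *)

From HB Require Import structures.
From mathcomp Require Import all_boot all_order all_algebra.
From mathcomp Require Import all_classical all_reals all_analysis.
Set Implicit Arguments. Unset Strict Implicit. Unset Printing Implicit Defensive.
Import Order.TTheory GRing.Theory Num.Theory.
Local Open Scope classical_set_scope.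
Local Open Scope ring_scope.
Local Open Scope ereal_scope.

Definition chi2 d (T : measurableType d) (R : realType)
  (Q P : probability T R) : \bar R :=
  \int[P]_x (Radon_Nikodym (charge_of_finite_measure Q) P x
             * Radon_Nikodym (charge_of_finite_measure Q) P x) - 1.

(* With L := dQ/dP, chi^2(Q || P) is the variance of L under P, and the
   covariance of L with the indicator of E is Q(E) - P(E).  Cauchy-Schwarz for
   the covariance gives (P(E) - Q(E))^2 <= chi^2(Q || P) P(E) (1 - P(E)), a
   quadratic inequality in P(E) whose larger root is the bound. *)

From HB Require Import structures.
From mathcomp Require Import all_boot all_order all_algebra.
From mathcomp Require Import all_classical all_reals all_analysis.
From mathcomp Require Import ring lra measurable_realfun.
Import Order.TTheory GRing.Theory Num.Theory.
Local Open Scope classical_set_scope.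
Local Open Scope ring_scope.

Lemma integrable_sqr_Lfun2 {d} {T : measurableType d} {R : realType}
    (mu : {measure set T -> \bar R}) (f : T -> R) : measurable_fun setT f ->
  mu.-integrable setT (EFin \o (fun x => f x ^+ 2)) -> f \in Lfun mu 2%:E.
Proof.
move=> mf /integrableP[_ f2fin]; rewrite inE; apply/andP; split; rewrite inE //=.
rewrite /finite_norm (@lty_poweRy _ _ 2) // powR_Lnorm //.
apply: le_lt_trans f2fin; rewrite le_eqVlt; apply/orP; left; apply/eqP.
by apply: eq_integral => x _; rewrite /= normrX powR_mulrn // normr_id.
Qed.

Section covariance.
Local Open Scope ereal_scope.
Context {d} {T : measurableType d} {R : realType} (P : probability T R).

Lemma indic_Lfun2 (A : set T) : measurable A -> \1_A \in Lfun P 2%:E.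
Proof.
move=> mA; apply: integrable_sqr_Lfun2; first exact: measurable_indic.
apply: eq_integrable (integrable_indic P mA) => // x _ /=.
by rewrite indicE; case: (x \in A); rewrite ?expr1n ?expr0n.
Qed.

Lemma variance_indic (A : set T) : measurable A ->
  'V_P[\1_A] = P A * (1 - P A).
Proof.
move=> mA; rewrite varianceE ?indic_Lfun2 //.
have -> : (\1_A ^+ 2 = \1_A :> (T -> R))%R.
  apply/funext => x; rewrite exprfctE /= indicE.
  by case: (x \in A); rewrite ?expr1n ?expr0n.
rewrite expectation_indic // -(fineK (fin_num_measure P _ mA)).
by rewrite -EFin_expe -EFinB -EFinM; congr EFin; ring.
Qed.

Lemma sqr_covariance_le (X Y : T -> R) : X \in Lfun P 2%:E -> Y \in Lfun P 2%:E ->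
  (fine (covariance P X Y) ^+ 2 <= fine 'V_P[X] * fine 'V_P[Y])%R.
Proof.
move=> X2 Y2.
have Pfin : P setT \is a fin_num := fin_num_measure P _ measurableT.
have X1 := Lfun_subset12 Pfin X2; have Y1 := Lfun_subset12 Pfin Y2.
have le_cov := covariance_le X2 Y2.
(* [covariance_le] is one-sided; the other side comes from [-X]. *)
have le_covN := covariance_le (Lfun_scale (-1) (ler1n _ 2) X2) Y2.
rewrite covarianceZl // ?Lfun2_mul_Lfun1 // (varianceZ _ X2) in le_covN.
rewrite -(fineK (covariance_fin_num X1 Y1 (Lfun2_mul_Lfun1 X2 Y2))) in le_cov le_covN.
rewrite -(fineK (variance_fin_num X2)) -(fineK (variance_fin_num Y2)) in le_cov le_covN.
move: le_cov le_covN; set c := fine _; set vX := fine _; set vY := fine _ => /=.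
rewrite -!EFinM !lee_fin => le_cov le_covN.
rewrite sqrrN expr1n mul1r mulN1r in le_covN.
have vX0 : (0 <= vX)%R by rewrite -lee_fin fineK ?variance_ge0 ?variance_fin_num.
have vY0 : (0 <= vY)%R by rewrite -lee_fin fineK ?variance_ge0 ?variance_fin_num.
rewrite -[(vX * vY)%R](sqr_sqrtr (mulr_ge0 vX0 vY0)) sqrtrM //.
rewrite -ler_sqrt ?sqr_ge0 // !sqrtr_sqr (ger0_norm (mulr_ge0 _ _)) ?sqrtr_ge0 //.
by rewrite ler_norml le_cov andbT lerNl.
Qed.

End covariance.

Definition likelihood_ratio {d} {T : measurableType d} {R : realType}
    (Q P : probability T R) (x : T) : R :=
  fine (Radon_Nikodym (charge_of_finite_measure Q) P x).

Section likelihood_ratio.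
Local Open Scope ereal_scope.
Context {d} {T : measurableType d} {R : realType} {P Q : probability T R}.
Hypothesis QP : Q `<< P.

Let dQdP := Radon_Nikodym (charge_of_finite_measure Q) P.
Let QP' : charge_of_finite_measure Q `<< P := QP.

Lemma Radon_Nikodym_likelihood_ratio : dQdP = EFin \o likelihood_ratio Q P.
Proof. by apply/funext => x /=; rewrite fineK // Radon_Nikodym_fin_num. Qed.

Lemma integrable_likelihood_ratio : P.-integrable setT (EFin \o likelihood_ratio Q P).
Proof. by rewrite -Radon_Nikodym_likelihood_ratio; exact: Radon_Nikodym_integrable. Qed.

Lemma measurable_likelihood_ratio : measurable_fun setT (likelihood_ratio Q P).
Proof. by apply/measurable_EFinP; exact: measurable_int integrable_likelihood_ratio. Qed.

Lemma expectation_likelihood_ratio_indic (A : set T) : measurable A ->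
  'E_P[likelihood_ratio Q P * \1_A] = Q A.
Proof.
move=> mA; have QA : Q A = \int[P]_(x in A) dQdP x := Radon_Nikodym_integral QP' mA.
rewrite unlock QA [RHS]integral_mkcond; apply: eq_integral => x _.
rewrite /patch -/dQdP Radon_Nikodym_likelihood_ratio /=.
by rewrite mulrfctE indicE; case: (x \in A); rewrite ?mulr1 ?mulr0.
Qed.

Lemma expectation_likelihood_ratio : 'E_P[likelihood_ratio Q P] = 1.
Proof.
rewrite -(probability_setT Q) -expectation_likelihood_ratio_indic //.
by congr expectation; apply/funext => x; rewrite /= indicT mulr1.
Qed.

Lemma chi2E : chi2 Q P = 'E_P[likelihood_ratio Q P ^+ 2] - 1.
Proof.
by rewrite /chi2 unlock -/dQdP Radon_Nikodym_likelihood_ratio.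
Qed.

Lemma likelihood_ratio_Lfun1 : likelihood_ratio Q P \in Lfun P 1.
Proof. exact/Lfun1_integrable/integrable_likelihood_ratio. Qed.

Lemma likelihood_ratio_indic_Lfun1 (A : set T) : measurable A ->
  (likelihood_ratio Q P * \1_A)%R \in Lfun P 1.
Proof.
move=> mA; apply/Lfun1_integrable.
apply: (le_integrable _ _ _ integrable_likelihood_ratio) => //.
  apply/measurable_EFinP/measurable_funM; first exact: measurable_likelihood_ratio.
  exact: measurable_indic.
move=> x _ /=; rewrite mulrfctE indicE lee_fin.
by case: (x \in A); rewrite ?mulr1 ?mulr0 ?normr0.
Qed.

Lemma covariance_likelihood_ratio_indic (A : set T) : measurable A ->
  covariance P (likelihood_ratio Q P) \1_A = Q A - P A.
Proof.
move=> mA; rewrite covarianceE ?likelihood_ratio_Lfun1 ?likelihood_ratio_indic_Lfun1 //.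
  rewrite (expectation_likelihood_ratio_indic _ mA) expectation_likelihood_ratio.
  by rewrite mul1e expectation_indic.
exact/Lfun1_integrable/integrable_indic.
Qed.

Hypothesis chi2_fin : chi2 Q P \is a fin_num.

Lemma likelihood_ratio_Lfun2 : likelihood_ratio Q P \in Lfun P 2%:E.
Proof.
apply: integrable_sqr_Lfun2; first exact: measurable_likelihood_ratio.
apply/integrableP; split.
  by apply/measurable_EFinP/measurable_funX; exact: measurable_likelihood_ratio.
rewrite (eq_integral (fun x => (likelihood_ratio Q P x ^+ 2)%:E)); last first.
  by move=> x _ /=; rewrite ger0_norm // sqr_ge0.
move: chi2_fin; rewrite chi2E fin_numB /= andbT unlock ge0_fin_numE //.
by apply: integral_ge0 => x _; rewrite lee_fin exprfctE sqr_ge0.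
Qed.

Lemma variance_likelihood_ratio : 'V_P[likelihood_ratio Q P] = chi2 Q P.
Proof.
rewrite varianceE ?likelihood_ratio_Lfun2 // expectation_likelihood_ratio.
by rewrite expe2 mule1 chi2E.
Qed.

End likelihood_ratio.

Lemma le_upper_root (R : rcfType) (p q r : R) : 0 <= r -> 0 <= q <= 1 ->
  (p - q) ^+ 2 <= r * (p * (1 - p)) ->
  p <= (r + 2 * q + Num.sqrt (r ^+ 2 + 4 * r * q * (1 - q))) / (2 * (1 + r)).
Proof.
move=> r0 /andP[q0 q1] sqr_le.
have den_gt0 : 0 < 2 * (1 + r) by lra.
rewrite ler_pdivlMr //.
set S := Num.sqrt _; set X := p * (2 * (1 + r)) - (r + 2 * q).
suff : X <= S by rewrite /X; lra.
have [Xn|Xp] := leP X 0; first exact: le_trans Xn (sqrtr_ge0 _).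
have disc_ge0 : 0 <= r ^+ 2 + 4 * r * q * (1 - q).
  apply: addr_ge0; first exact: sqr_ge0.
  by rewrite -mulrA mulr_ge0 ?mulr_ge0 // subr_ge0.
rewrite -(ger0_norm (ltW Xp)) -sqrtr_sqr /S ler_sqrt // -subr_ge0.
have -> : r ^+ 2 + 4 * r * q * (1 - q) - X ^+ 2
    = 4 * (1 + r) * (r * (p * (1 - p)) - (p - q) ^+ 2) by rewrite /X; ring.
by apply: mulr_ge0; lra.
Qed.

Theorem mainTheorem18 (d : measure_display) (T : measurableType d) (R : realType)
  (P Q : probability T R) (E : set T) (mE : measurable E)
  (PQ : P `<< Q) (QP : Q `<< P) (rfin : chi2 Q P \is a fin_num) :
  let q := fine (Q E) in
  let r := fine (chi2 Q P) in
  fine (P E) <= (r + 2 * q + Num.sqrt (r ^+ 2 + 4 * r * q * (1 - q))) / (2 * (1 + r)).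
Proof.
cbv zeta; apply: le_upper_root.
- by rewrite -(variance_likelihood_ratio QP rfin) fine_ge0 ?variance_ge0.
- by rewrite fine_ge0 //= -lee_fin fineK ?fin_num_measure ?probability_le1.
have := sqr_covariance_le _ _ _ (likelihood_ratio_Lfun2 QP rfin) (indic_Lfun2 P _ mE).
rewrite covariance_likelihood_ratio_indic // variance_likelihood_ratio // variance_indic //.
rewrite -(fineK (fin_num_measure Q _ mE)) -(fineK (fin_num_measure P _ mE)).
by rewrite -EFinB -EFinM /= -sqrrN opprB.
Qed.
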